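(* Let $f\ge 2$, $q=p^f$, and let $r=r_0+r_1p+\cdots+r_{f-1}p^{f-1}$ with integers $r_j\ge q$ for all $0\le j\le f-1$ and $r$ divisible by $q-1$. Let $W=\bigotimes_{j=0}^{f-1}V_{r_j}^{\mathrm{Fr}^j}$ and $\overline W = W/\langle\theta_0,\dots,\theta_{f-1}\rangle$. Define linear maps $\iota_0:\bigotimes_{j=0}^{f-1}V_0^{\mathrm{Fr}^j}\to \overline W$ by \[ 1\mapsto \prod_{j}X_j^{r_j}-\prod_j X_j^{r_j-(p-1)}Y_j^{p-1}+\prod_j Y_j^{r_j}, \] and $\iota_{p-1}:\bigotimes_{j=0}^{f-1}V_{p-1}^{\mathrm{Fr}^j}\to\overline W$ on monomials by \[ \prod_j X_j^{p-1-i_j}Y_j^{i_j}\mapsto \prod_j X_j^{r_j-i_j}Y_j^{i_j}\quad\text{if }(i_0,\dots,i_{f-1})\ne(p-1,\dots,p-1),\qquad \prod_j Y_j^{p-1}\mapsto \prod_jY_j^{r_j} \] (with $0\le i_j\le p-1$). Then $\iota_0$ and $\iota_{p-1}$ are $\mathrm{GL}_2(\mathbb{F}_q)$-equivariant and together induce an isomorphism of $\mathrm{GL}_2(\mathbb{F}_q)$-representations \[ \iota_0\oplus\iota_{p-1}:\ \bigotimes_{j=0}^{f-1}V_0^{\mathrm{Fr}^j}\ \oplus\ \bigotimes_{j=0}^{f-1}V_{p-1}^{\mathrm{Fr}^j}\ \xrightarrow{\ \sim\ }\ \overline W . \]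
   Context: $p$ is a prime, $\mathbb{F}_q$ the field with $q=p^f$ elements, and all representations are over $\overline{\mathbb{F}}_p$ (with a fixed embedding $\mathbb{F}_q\hookrightarrow\overline{\mathbb{F}}_p$). For an integer $n\ge0$ and $0\le j\le f-1$, $V_n^{\mathrm{Fr}^j}$ denotes the space of homogeneous polynomials of degree $n$ in variables $X_j,Y_j$, on which $g=\begin{pmatrix}a&b\\c&d\end{pmatrix}\in\mathrm{GL}_2(\mathbb{F}_q)$ acts by $(g\cdot P)(X_j,Y_j)=P(a^{p^j}X_j+c^{p^j}Y_j,\ b^{p^j}X_j+d^{p^j}Y_j)$; tensor products carry the diagonal action, so $\bigotimes_j V_{n_j}^{\mathrm{Fr}^j}$ is identified with polynomials in $X_0,Y_0,\dots,X_{f-1},Y_{f-1}$ homogeneous of degree $n_j$ in $(X_j,Y_j)$ for each $j$. In particular $\bigotimes_j V_0^{\mathrm{Fr}^j}$ is the trivial representation. For $j\in\mathbb{Z}/f\mathbb{Z}$, $\theta_j=X_jY_{j-1}^p-Y_jX_{j-1}^p$, and $\langle\theta_0,\dots,\theta_{f-1}\rangle$ denotes the subrepresentation of $W$ consisting of elements of $W$ lying in the ideal generated by $\theta_0,\dots,\theta_{f-1}$ in the polynomial ring. *)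

From HB Require Import structures.
From mathcomp Require Import all_boot all_order all_algebra.
From mathcomp Require Import mpoly.

Set Implicit Arguments.
Unset Strict Implicit.
Unset Printing Implicit Defensive.

Import GRing.Theory.
Local Open Scope ring_scope.

Section SerreWeightDefs.
Variables (F : fieldType) (f : nat).

(* The polynomial ring in X_0,Y_0,...,X_{f-1},Y_{f-1}: variable X_j is index
   j and Y_j is index f + j of 'I_(f + f). *)
Notation Pol := {mpoly F[f + f]}.

Definition Xv (j : 'I_f) : 'I_(f + f) := lshift f j.
Definition Yv (j : 'I_f) : 'I_(f + f) := rshift f j.

Lemma prevj_lt (j : 'I_f) : ((j + f.-1) %% f < f)%N.
Proof. by apply: ltn_pmod; apply: leq_ltn_trans (leq0n j) (ltn_ord j). Qed.

(* j - 1 in Z/fZ *)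
Definition prevj (j : 'I_f) : 'I_f := Ordinal (prevj_lt j).

Definition theta (p : nat) (j : 'I_f) : Pol :=
  'X_(Xv j) * 'X_(Yv (prevj j)) ^+ p - 'X_(Yv j) * 'X_(Xv (prevj j)) ^+ p.

Definition in_theta_ideal (p : nat) (P : Pol) : Prop :=
  exists c : 'I_f -> Pol, P = \sum_(j < f) c j * theta p j.

(* P lies in (tensor_j V_{d_j}^{Fr^j}): homogeneous of degree d j in (X_j,Y_j)
   for every j. *)
Definition multihomog (d : 'I_f -> nat) (P : Pol) : Prop :=
  forall m, m \in msupp P -> forall j : 'I_f, (m (Xv j) + m (Yv j))%N = d j.

Definition gl_subst (p : nat) (g : 'M[F]_2) (i : 'I_(f + f)) : Pol :=
  match split i with
  | inl j => (g 0 0 ^+ (p ^ j)) *: 'X_(Xv j) + (g 1 0 ^+ (p ^ j)) *: 'X_(Yv j)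
  | inr j => (g 0 1 ^+ (p ^ j)) *: 'X_(Xv j) + (g 1 1 ^+ (p ^ j)) *: 'X_(Yv j)
  end.

Definition glact (p : nat) (g : 'M[F]_2) (P : Pol) : Pol :=
  P \mPo [tuple gl_subst p g i | i < f + f].

(* g is (the image in M_2(F) of) an element of GL_2(F_q), F_q = {x | x^q = x} *)
Definition inGL2Fq (q : nat) (g : 'M[F]_2) : bool :=
  [forall i, forall j, g i j ^+ q == g i j] && (g \in unitmx).

Definition iota0 (p : nat) (r : 'I_f -> nat) : Pol :=
  \prod_(j < f) 'X_(Xv j) ^+ r j
  - \prod_(j < f) ('X_(Xv j) ^+ (r j - p.-1) * 'X_(Yv j) ^+ p.-1)
  + \prod_(j < f) 'X_(Yv j) ^+ r j.

(* image of the monomial prod_j X_j^{p-1-i_j} Y_j^{i_j}, where i_j = m (Yv j) *)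
Definition iota_mon (p : nat) (r : 'I_f -> nat) (m : 'X_{1..f + f}) : Pol :=
  if [forall j : 'I_f, m (Yv j) == p.-1] then \prod_(j < f) 'X_(Yv j) ^+ r j
  else \prod_(j < f) ('X_(Xv j) ^+ (r j - m (Yv j)) * 'X_(Yv j) ^+ m (Yv j)).

(* linear extension of iota_{p-1} (meaningful on multihomog (fun _ => p-1)) *)
Definition iotap1 (p : nat) (r : 'I_f -> nat) (P : Pol) : Pol :=
  \sum_(m <- msupp P) P@_m *: iota_mon p r m.

End SerreWeightDefs.

From HB Require Import structures.
From mathcomp Require Import all_boot all_order all_algebra all_field.
From mathcomp Require Import mpoly zify ring.

Set Implicit Arguments.
Unset Strict Implicit.
Unset Printing Implicit Defensive.

Import GRing.Theory.
Local Open Scope ring_scope.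

(* Evaluate [(X_j, Y_j)] at [(x ^ p ^ j, y ^ p ^ j)] for [x, y] in [F_q]. This
   kills every [theta_j], sends [iota0] to the indicator function of
   [F_q^2 \ 0] and [iota_(p-1) P] to the function of [P], and turns the
   action of [g] into substitution of [(x, y) g]. Surjectivity is a reduction
   argument: modulo [theta_j] one may replace [X_j Y_(j-1)^p] by
   [Y_j X_(j-1)^p], which lowers the [Y]-degree, and the monomials where no
   such move applies are visibly in the image. Injectivity: on the line
   [x = 1], [c iota0 + iota_(p-1) P] becomes [c + sum_m P_m y^(radix_p m)], a
   polynomial of degree [< q] with distinct exponents; vanishing on [F_q], it
   is zero, so only monomials of [P] without [Y] survive, and the point
   [(0, 1)] then forces [c = 0]. Together these show that an element of [W]
   vanishing on [F_q^2] lies in [<theta>], which gives equivariance, since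
   both sides of each identity define the same function. *)

Section Monomials.
Variables (F : fieldType) (f : nat).
Local Notation Pol := {mpoly F[f + f]}.
Implicit Types (a b d : 'I_f -> nat) (m : 'X_{1..f + f}) (P Q : Pol).

Definition mnmXY a b : 'X_{1..f + f} :=
  [multinom (match split i with inl j => a j | inr j => b j end) | i < f + f].

Lemma mnmXY_X a b j : mnmXY a b (Xv j) = a j.
Proof. by rewrite mnmE /Xv (unsplitK (inl _ j)). Qed.

Lemma mnmXY_Y a b j : mnmXY a b (Yv j) = b j.
Proof. by rewrite mnmE /Yv (unsplitK (inr _ j)). Qed.

Lemma mnmXY_eta m : m = mnmXY (fun j => m (Xv j)) (fun j => m (Yv j)).
Proof. by apply/mnmP => i; rewrite mnmE -[in LHS](splitK i); case: (split i). Qed.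

Lemma eq_mnmXY a b a' b' : a =1 a' -> b =1 b' -> mnmXY a b = mnmXY a' b'.
Proof. by move=> ea eb; apply/mnmP => i; rewrite !mnmE; case: (split i). Qed.

Lemma mpolyX_mnmXY a b :
  'X_[mnmXY a b] = \prod_(j < f) ('X_(Xv j) ^+ a j * 'X_(Yv j) ^+ b j) :> Pol.
Proof.
rewrite mpolyXE_id big_split_ord /= big_split /=.
by congr (_ * _); apply: eq_bigr => j _; rewrite ?mnmXY_X ?mnmXY_Y.
Qed.

Lemma eq_multihomog d d' P : d =1 d' -> multihomog d P -> multihomog d' P.
Proof. by move=> e hP m hm j; rewrite -e hP. Qed.

Lemma multihomog0 d : multihomog d (0 : Pol).
Proof. by move=> m; rewrite msupp0. Qed.

Lemma multihomogD d P Q :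
  multihomog d P -> multihomog d Q -> multihomog d (P + Q).
Proof. by move=> hP hQ m /msuppD_le; rewrite mem_cat => /orP [/hP|/hQ]. Qed.

Lemma multihomogN d P : multihomog d P -> multihomog d (- P).
Proof. by move=> hP m; rewrite (perm_mem (msuppN P)) => /hP. Qed.

Lemma multihomogB d P Q :
  multihomog d P -> multihomog d Q -> multihomog d (P - Q).
Proof. by move=> hP hQ; apply: multihomogD => //; apply: multihomogN. Qed.

Lemma multihomogZ d c P : multihomog d P -> multihomog d (c *: P).
Proof. by move=> hP m /msuppZ_le /hP. Qed.

Lemma multihomog_sum d (I : eqType) (s : seq I) (G : I -> Pol) :
  (forall i, i \in s -> multihomog d (G i)) ->
  multihomog d (\sum_(i <- s) G i).
Proof.
elim: s => [|i s IHs] hG; first by rewrite big_nil; apply: multihomog0.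
rewrite big_cons; apply: multihomogD; first by apply: hG; rewrite mem_head.
by apply: IHs => k hk; apply: hG; rewrite inE hk orbT.
Qed.

Lemma multihomogX d m :
  (forall j, m (Xv j) + m (Yv j) = d j)%N -> multihomog d ('X_[m] : Pol).
Proof. by move=> hm m'; rewrite msuppX inE => /eqP ->. Qed.

Lemma multihomogM d d' P Q : multihomog d P -> multihomog d' Q ->
  multihomog (fun j => d j + d' j)%N (P * Q).
Proof.
move=> hP hQ m /msuppM_le /allpairsP [[m1 m2] /= [h1 h2 ->]] j.
by rewrite !mnmDE addnACA hP // hQ.
Qed.

Lemma multihomog_prod (I : eqType) (s : seq I) (d : I -> 'I_f -> nat)
    (G : I -> Pol) :
  (forall i, i \in s -> multihomog (d i) (G i)) ->
  multihomog (fun j => \sum_(i <- s) d i j)%N (\prod_(i <- s) G i).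
Proof.
elim: s => [|i s IHs] hG.
  rewrite big_nil -mpolyX0; apply: multihomogX => j.
  by rewrite !mnm0E big_nil.
rewrite big_cons; apply: (eq_multihomog _ (multihomogM (hG i (mem_head _ _)) _)).
  by move=> j; rewrite big_cons.
by apply: IHs => k hk; apply: hG; rewrite inE hk orbT.
Qed.

Lemma multihomogXn d k P :
  multihomog d P -> multihomog (fun j => k * d j)%N (P ^+ k).
Proof.
move=> hP; elim: k => [|k IHk].
  by rewrite expr0 -mpolyX0; apply: multihomogX => j; rewrite !mnm0E.
by rewrite exprS; apply: eq_multihomog (multihomogM hP IHk) => j; rewrite mulSn.
Qed.

Definition var_block (i : 'I_(f + f)) (j : 'I_f) : nat :=
  match split i with inl j' | inr j' => j' == j end.

Lemma multihomog_glact d (p : nat) (g : 'M[F]_2) P :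
  multihomog d P -> multihomog d (glact p g P).
Proof.
move=> hP; rewrite /glact comp_mpolyE; apply: multihomog_sum => m hm.
apply: multihomogZ; apply: eq_multihomog; last first.
  apply: (multihomog_prod (d := fun i j => m i * var_block i j)%N) => i _.
  rewrite tnth_mktuple; apply: multihomogXn.
  rewrite /gl_subst /var_block; case: (split i) => j';
  by apply: multihomogD; apply: multihomogZ; apply: multihomogX => j;
     rewrite !mnm1E ?eq_lshift ?eq_rshift ?eq_lrshift ?eq_rlshift ?addn0.
move=> j; rewrite -(hP m hm j) big_split_ord /var_block /=.
by congr (_ + _)%N; rewrite (bigD1 j) //= ?(unsplitK (inl _ j)) ?(unsplitK (inr _ j))
  eqxx muln1 big1 ?addn0 // => k /negbTE hk;
  rewrite ?(unsplitK (inl _ k)) ?(unsplitK (inr _ k)) hk muln0.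
Qed.

End Monomials.

Section ThetaIdeal.
Variables (F : fieldType) (f p : nat).
Local Notation Pol := {mpoly F[f + f]}.
Local Notation I := (@in_theta_ideal F f p).
Implicit Types (P Q R : Pol).

Lemma in_theta_ideal0 : I 0.
Proof. by exists (fun _ => 0); rewrite big1 // => j _; rewrite mul0r. Qed.

Lemma in_theta_idealD P Q : I P -> I Q -> I (P + Q).
Proof.
move=> [c ->] [c' ->]; exists (fun j => c j + c' j).
by rewrite -big_split /=; apply: eq_bigr => j _; rewrite mulrDl.
Qed.

Lemma in_theta_idealMl R P : I P -> I (R * P).
Proof.
move=> [c ->]; exists (fun j => R * c j).
by rewrite mulr_sumr; apply: eq_bigr => j _; rewrite mulrA.
Qed.

Lemma in_theta_idealN P : I P -> I (- P).
Proof. by rewrite -mulN1r; apply: in_theta_idealMl. Qed.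

Lemma in_theta_idealZ c P : I P -> I (c *: P).
Proof. by rewrite -mul_mpolyC; apply: in_theta_idealMl. Qed.

Lemma in_theta_ideal_theta R j : I (R * theta F p j).
Proof.
exists (fun k => if k == j then R else 0).
by rewrite (bigD1 j) //= eqxx big1 ?addr0 // => k /negbTE ->; rewrite mul0r.
Qed.

End ThetaIdeal.

Definition radix (p f : nat) (a : 'I_f -> nat) : nat := \sum_(j < f) a j * p ^ j.

Lemma radix_pred (p f : nat) : (0 < p)%N -> radix p (fun _ : 'I_f => p.-1) = (p ^ f).-1.
Proof.
rewrite /radix => p0; elim: f => [|n IHn]; first by rewrite big_ord0 expn0.
rewrite big_ord_recr /= IHn expnS -!subn1.
have : (0 < p ^ n)%N by rewrite expn_gt0 p0.
move: (p ^ n)%N => t; nia.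
Qed.

Lemma radix_inj (p f : nat) (a b : 'I_f -> nat) :
  (forall j, a j < p)%N -> (forall j, b j < p)%N ->
  radix p a = radix p b -> a =1 b.
Proof.
rewrite /radix; elim: f a b => [|n IHn] a b ha hb; first by move=> _ [].
rewrite !big_ord_recl /= !expn0 !muln1.
have shift (c : 'I_n.+1 -> nat) : (\sum_(i < n) c (lift ord0 i) * p ^ bump 0 i =
    p * \sum_(i < n) c (lift ord0 i) * p ^ i)%N.
  by rewrite big_distrr /=; apply: eq_bigr => i _; rewrite expnS mulnCA.
rewrite !shift => eq_ab.
have e0 : a ord0 = b ord0.
  move: (congr1 (modn^~ p) eq_ab).
  by rewrite ![(_ + p * _)%N]addnC ![(p * _)%N]mulnC !modnMDl !modn_small.
have p0 : (0 < p)%N by apply: leq_ltn_trans (ha ord0).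
move: eq_ab; rewrite e0 => /addnI /eqP; rewrite eqn_pmul2l // => /eqP eq_ab.
have e := IHn _ _ (fun i => ha (lift ord0 i)) (fun i => hb (lift ord0 i)) eq_ab.
by move=> j; case: (unliftP ord0 j) => [i ->|->].
Qed.

Section FixedPointsOfFrobenius.
Variables (F : fieldType) (q : nat).
Hypothesis q_gt1 : (1 < q)%N.
Implicit Types x : F.

Lemma fixq_expr_pred x : x ^+ q = x -> x ^+ q.-1 = (x != 0)%:R.
Proof.
move=> hx; have [->|nz] := eqVneq x 0; first by rewrite expr0n; case: q q_gt1 => [|[]].
by apply: (mulfI nz); rewrite -exprS prednK ?hx ?mulr1 // ltnW.
Qed.

Lemma fixq_expr_mul x n : x ^+ q = x -> (0 < n)%N -> x ^+ (q.-1 * n) = x ^+ q.-1.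
Proof.
move=> hx n0; rewrite exprM fixq_expr_pred //.
by case: (x != 0); rewrite /= ?mulr1n ?mulr0n ?expr1n // expr0n gtn_eqF.
Qed.

Lemma fixq_exprD_mul x e n :
  x ^+ q = x -> (0 < e)%N -> x ^+ (e + q.-1 * n) = x ^+ e.
Proof.
move=> hx e0; rewrite exprD exprM fixq_expr_pred //.
by have [->|] := eqVneq x 0; rewrite /= ?mulr1n ?expr1n ?mulr1 // expr0n gtn_eqF ?mul0r.
Qed.

End FixedPointsOfFrobenius.

Section FrobeniusEvaluation.
Variables (F : fieldType) (f p : nat).
Local Notation Pol := {mpoly F[f + f]}.
Local Notation q := (p ^ f)%N.

Definition frob_point (x y : F) (i : 'I_(f + f)) : F :=
  match split i with inl j => x ^+ (p ^ j) | inr j => y ^+ (p ^ j) end.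

Definition evalFr (x y : F) (P : Pol) : F := P.@[frob_point x y].

Lemma evalFrD x y : {morph evalFr x y : P Q / P + Q}.
Proof. exact: mevalD. Qed.

Lemma evalFrB x y : {morph evalFr x y : P Q / P - Q}.
Proof. exact: mevalB. Qed.

Lemma evalFrZ x y c P : evalFr x y (c *: P) = c * evalFr x y P.
Proof. exact: mevalZ. Qed.

Lemma evalFrX x y (m : 'X_{1..f + f}) : evalFr x y 'X_[m] =
  x ^+ radix p (fun j => m (Xv j)) * y ^+ radix p (fun j => m (Yv j)).
Proof.
rewrite /evalFr mevalX big_split_ord /= -!prodrXr.
by congr (_ * _); apply: eq_bigr => j _;
  rewrite /frob_point ?(unsplitK (inl _ j)) ?(unsplitK (inr _ j)) mulnC exprM.
Qed.

Lemma evalFr_mnmXY x y a b :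
  evalFr x y 'X_[mnmXY a b] = x ^+ radix p a * y ^+ radix p b.
Proof.
rewrite evalFrX; congr (_ ^+ _ * _ ^+ _); apply: eq_bigr => j _;
  by rewrite ?mnmXY_X ?mnmXY_Y.
Qed.

Lemma evalFrE x y (P : Pol) : evalFr x y P = \sum_(m <- msupp P)
  P@_m * (x ^+ radix p (fun j => m (Xv j)) * y ^+ radix p (fun j => m (Yv j))).
Proof.
rewrite {1}(mpolyE P) /evalFr raddf_sum /=; apply: eq_bigr => m _.
by rewrite mevalZ -/(evalFr x y _) evalFrX.
Qed.

Lemma evalFr_glact (g : 'M[F]_2) (P : Pol) x y :
  prime p -> p \in [pchar F] ->
  evalFr x y (glact p g P) =
    evalFr (g 0 0 * x + g 1 0 * y) (g 0 1 * x + g 1 1 * y) P.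
Proof.
move=> pr chp; rewrite /evalFr /glact comp_mpoly_meval; apply: meval_eq => i.
have frobD (u v : F) k : (u + v) ^+ (p ^ k) = u ^+ (p ^ k) + v ^+ (p ^ k).
  by apply: exprDn_pchar; rewrite pnatX (pnatE _ pr) chp.
rewrite tnth_mktuple /gl_subst /frob_point; case: (split i) => j;
by rewrite mevalD !mevalZ !mevalXU /frob_point (unsplitK (inl _ j))
  (unsplitK (inr _ j)) frobD !exprMn.
Qed.

Lemma fixq_expr_prevj (z : F) (j : 'I_f) :
  z ^+ q = z -> (z ^+ (p ^ prevj j)) ^+ p = z ^+ (p ^ j).
Proof.
move=> hz; rewrite -exprM -expnSr /prevj /=.
have f0 : (0 < f)%N by apply: leq_ltn_trans (ltn_ord j).
case: j => [[|j] hj] /=.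
  by rewrite add0n modn_small ?ltn_predL // prednK // hz expn0 expr1.
have -> : (j.+1 + f.-1 = j + f)%N by rewrite addSn -addnS prednK.
by rewrite modnDr modn_small // ltnW.
Qed.

Lemma evalFr_theta x y (j : 'I_f) : x ^+ q = x -> y ^+ q = y ->
  evalFr x y (theta F p j) = 0.
Proof.
move=> hx hy; rewrite /evalFr /theta rmorphB !rmorphM !rmorphXn /= !mevalXU.
rewrite /frob_point /Xv /Yv !(unsplitK (inl _ _)) !(unsplitK (inr _ _)) /=.
by rewrite !fixq_expr_prevj // mulrC subrr.
Qed.

Lemma evalFr_theta_ideal x y (P : Pol) : x ^+ q = x -> y ^+ q = y ->
  in_theta_ideal p P -> evalFr x y P = 0.
Proof.
move=> hx hy [c ->]; rewrite /evalFr raddf_sum /=; apply: big1 => j _.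
by rewrite rmorphM /= (evalFr_theta j hx hy : _.@[_] = 0) mulr0.
Qed.

End FrobeniusEvaluation.

Lemma big_msupp_widen (n : nat) (R : nzRingType) (V : lmodType R)
    (phi : 'X_{1..n} -> V) (P : {mpoly R[n]}) (s : seq 'X_{1..n}) :
  uniq s -> {subset msupp P <= s} ->
  \sum_(m <- msupp P) P@_m *: phi m = \sum_(m <- s) P@_m *: phi m.
Proof.
move=> us sub; rewrite [RHS](bigID (mem (msupp P))) /=.
rewrite [X in _ + X]big1 ?addr0 => [|m /memN_msupp_eq0 ->]; last by rewrite scale0r.
rewrite -[in RHS]big_filter; apply: perm_big; apply: uniq_perm; rewrite ?msupp_uniq ?filter_uniq //.
by move=> m; rewrite mem_filter andb_idr //; apply: sub.
Qed.

Section IotaMaps.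
Variables (F : fieldType) (p f : nat) (r : 'I_f -> nat).
Hypothesis pr : prime p.
Hypothesis f_gt0 : (0 < f)%N.
Hypothesis r_ge_q : forall j, (p ^ f <= r j)%N.
Local Notation Pol := {mpoly F[f + f]}.
Local Notation q := (p ^ f)%N.
Local Notation cst k := (fun _ : 'I_f => k%N).
Implicit Types (m : 'X_{1..f + f}) (P Q : Pol).

Lemma p_gt1 : (1 < p)%N. Proof. exact: prime_gt1. Qed.

Lemma q_gt1 : (1 < q)%N.
Proof. exact: leq_ltn_trans f_gt0 (ltn_expl f p_gt1). Qed.

Lemma p_le_r j : (p <= r j)%N.
Proof.
by apply: leq_trans (r_ge_q j); rewrite -{1}(expn1 p) leq_pexp2l // ltnW // p_gt1.
Qed.

Lemma predp_le_r j : (p.-1 <= r j)%N.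
Proof. exact: leq_trans (leq_pred p) (p_le_r j). Qed.

Lemma iota0E : iota0 F p r =
  'X_[mnmXY r (cst 0)] - 'X_[mnmXY (fun j => r j - p.-1)%N (cst p.-1)]
  + 'X_[mnmXY (cst 0) r].
Proof.
by rewrite /iota0 !mpolyX_mnmXY; congr (_ - _ + _); apply: eq_bigr => j _;
  rewrite ?expr0 ?mulr1 ?mul1r.
Qed.

Definition Ysaturated m := [forall j : 'I_f, m (Yv j) == p.-1].

Lemma iota_monE m : iota_mon F p r m =
  if Ysaturated m then 'X_[mnmXY (cst 0) r]
  else 'X_[mnmXY (fun j => r j - m (Yv j))%N (fun j => m (Yv j))].
Proof.
rewrite /iota_mon /Ysaturated !mpolyX_mnmXY; case: ifP => // _.
by apply: eq_bigr => j _; rewrite expr0 mul1r.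
Qed.

Lemma multihomog_iota0 : multihomog r (iota0 F p r).
Proof.
rewrite iota0E; apply: multihomogD; first apply: multihomogB; apply: multihomogX => j;
by rewrite mnmXY_X mnmXY_Y ?addn0 ?add0n // subnK // predp_le_r.
Qed.

Lemma multihomog_iota_mon m : (forall j, m (Xv j) + m (Yv j) = p.-1)%N ->
  multihomog r (iota_mon F p r m : Pol).
Proof.
move=> hm; rewrite iota_monE; case: ifP => _; apply: multihomogX => j;
rewrite mnmXY_X mnmXY_Y ?add0n // subnK //.
by apply: leq_trans (predp_le_r j); rewrite -(hm j) leq_addl.
Qed.

Lemma multihomog_iotap1 P : multihomog (cst p.-1) P -> multihomog r (iotap1 p r P).
Proof.
move=> hP; apply: multihomog_sum => m hm; apply: multihomogZ.
exact: multihomog_iota_mon (hP m hm).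
Qed.

Lemma iotap1D P Q : iotap1 p r (P + Q) = iotap1 p r P + iotap1 p r Q.
Proof.
pose s := undup (msupp P ++ msupp Q).
have us : uniq s by apply: undup_uniq.
rewrite /iotap1 !(big_msupp_widen _ us) -?big_split /=.
- by apply: eq_bigr => m _; rewrite mcoeffD scalerDl.
- by move=> m hm; rewrite mem_undup mem_cat hm orbT.
- by move=> m hm; rewrite mem_undup mem_cat hm.
- by move=> m /msuppD_le; rewrite mem_undup.
Qed.

Lemma iotap1Z c P : iotap1 p r (c *: P) = c *: iotap1 p r P.
Proof.
rewrite /iotap1 (big_msupp_widen _ (msupp_uniq P) (@msuppZ_le _ _ c P)) scaler_sumr.
by apply: eq_bigr => m _; rewrite mcoeffZ scalerA.
Qed.

Lemma iotap1_0 : iotap1 p r (0 : Pol) = 0.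
Proof. by rewrite /iotap1 msupp0 big_nil. Qed.

Lemma iotap1X m : iotap1 p r ('X_[m] : Pol) = iota_mon F p r m.
Proof. by rewrite /iotap1 msuppX big_seq1 mcoeffX eqxx scale1r. Qed.

End IotaMaps.

Lemma radixD (p f : nat) (a b : 'I_f -> nat) :
  radix p (fun j => a j + b j)%N = (radix p a + radix p b)%N.
Proof. by rewrite /radix -big_split; apply: eq_bigr => j _; rewrite mulnDl. Qed.

Lemma radix_pred_split (p f : nat) (a b : 'I_f -> nat) : (0 < p)%N ->
  (forall j, a j + b j = p.-1)%N -> (radix p a + radix p b)%N = (p ^ f).-1.
Proof.
by move=> p0 hab; rewrite -radixD -(radix_pred f p0); apply: eq_bigr => j _; rewrite hab.
Qed.

Section IotaEvaluation.
Variables (F : fieldType) (p f : nat) (r : 'I_f -> nat).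
Hypothesis pr : prime p.
Hypothesis f_gt0 : (0 < f)%N.
Hypothesis r_ge_q : forall j, (p ^ f <= r j)%N.
Local Notation q := (p ^ f)%N.
Hypothesis dvd_q1_r : (q.-1 %| radix p r)%N.
Local Notation Pol := {mpoly F[f + f]}.
Local Notation cst k := (fun _ : 'I_f => k%N).
Implicit Types (x y : F) (m : 'X_{1..f + f}) (P : Pol).

Let k := (radix p r %/ q.-1)%N.

Let radix_r : radix p r = (q.-1 * k)%N.
Proof. by rewrite mulnC divnK. Qed.

Let k_gt1 : (1 < k)%N.
Proof.
have q1 := q_gt1 pr f_gt0.
have : (q <= radix p r)%N.
  rewrite /radix (bigD1 (Ordinal f_gt0)) //= expn0 muln1.
  exact: leq_trans (r_ge_q _) (leq_addr _ _).
by rewrite radix_r -subn1; move: q1; nia.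
Qed.

Let radix_const0 : radix p (cst 0) = 0%N.
Proof. by rewrite /radix big1. Qed.

Let radix_predp : radix p (cst p.-1) = q.-1.
Proof. by rewrite radix_pred // ltnW // p_gt1. Qed.

Let radix_r_sub (a b : 'I_f -> nat) : (forall j, a j + b j = p.-1)%N ->
  radix p (fun j => r j - b j)%N = (radix p a + q.-1 * k.-1)%N.
Proof.
move=> hab.
have e1 : (radix p (fun j => r j - b j) + radix p b = q.-1 * k)%N.
  rewrite -radix_r -radixD; apply: eq_bigr => j _; rewrite subnK //.
  by apply: leq_trans (predp_le_r pr f_gt0 r_ge_q j); rewrite -(hab j) leq_addl.
have e2 := radix_pred_split (prime_gt0 pr) hab.
by move: e1 e2 k_gt1; rewrite -!subn1; nia.
Qed.

Lemma evalFr_iota0 x y : x ^+ q = x -> y ^+ q = y ->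
  evalFr p x y (iota0 F p r) = ((x != 0) || (y != 0))%:R.
Proof.
move=> hx hy; have q1 := q_gt1 pr f_gt0.
rewrite iota0E evalFrD evalFrB !evalFr_mnmXY radix_r radix_const0.
rewrite (radix_r_sub (a := cst 0)) ?radix_const0 => [|j]; last by rewrite add0n.
rewrite radix_predp !expr0 add0n mulr1 mul1r !fixq_expr_mul ?(ltnW k_gt1) //.
  by rewrite !fixq_expr_pred //; case: (x != 0); case: (y != 0); rewrite /=; ring.
by rewrite -subn1 subn_gt0.
Qed.

Lemma evalFr_iota_mon x y m : x ^+ q = x -> y ^+ q = y ->
  (forall j, m (Xv j) + m (Yv j) = p.-1)%N ->
  evalFr p x y (iota_mon F p r m) = evalFr p x y 'X_[m].
Proof.
move=> hx hy hm; have q1 := q_gt1 pr f_gt0.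
have radix_XY := radix_pred_split (prime_gt0 pr) hm.
rewrite iota_monE evalFrX; case: ifPn => [/forallP allY | /forallPn [j0 hj0]];
  rewrite evalFr_mnmXY.
  have radixY : radix p (fun j => m (Yv j)) = q.-1.
    by rewrite -radix_predp; apply: eq_bigr => j _; rewrite (eqP (allY j)).
  move: radix_XY; rewrite radixY radix_const0 radix_r -{2}[q.-1]add0n => /addIn ->.
  by rewrite fixq_expr_mul // ltnW.
rewrite (radix_r_sub hm) fixq_exprD_mul //.
rewrite /radix (bigD1 j0) //= ltn_addr // muln_gt0 expn_gt0 (prime_gt0 pr) andbT.
by have := hm j0; move: hj0; lia.
Qed.

Lemma evalFr_iotap1 x y P : x ^+ q = x -> y ^+ q = y ->
  multihomog (cst p.-1) P -> evalFr p x y (iotap1 p r P) = evalFr p x y P.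
Proof.
move=> hx hy hP; rewrite [in RHS](mpolyE P) /iotap1 /evalFr !raddf_sum /=.
rewrite big_seq [in RHS]big_seq; apply: eq_bigr => m hm; rewrite !mevalZ.
by rewrite -!/(evalFr p x y _) evalFr_iota_mon // => j; rewrite (hP m hm).
Qed.

End IotaEvaluation.

Lemma prevj_ind (f : nat) (P : 'I_f -> Prop) (j0 : 'I_f) :
  P j0 -> (forall j, P (prevj j) -> P j) -> forall j, P j.
Proof.
move=> P0 step j; have f0 : (0 < f)%N by apply: leq_ltn_trans (ltn_ord j).
pose jk k : 'I_f := Ordinal (ltn_pmod (j0 + k) f0).
have -> : j = jk (j + f - j0)%N.
  apply: val_inj => /=; have hj0 := ltn_ord j0.
  have -> : (j0 + (j + f - j0) = j + f)%N by lia.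
  by rewrite modnDr modn_small.
elim: (j + f - j0)%N => [|k IHk].
  by have -> : jk 0%N = j0 by apply: val_inj; rewrite /= addn0 modn_small.
apply: step; have -> // : prevj (jk k.+1) = jk k.
apply: val_inj => /=; rewrite modnDml.
have -> : (j0 + k.+1 + f.-1 = j0 + k + f)%N by lia.
by rewrite modnDr.
Qed.

Section Reduction.
Variables (F : fieldType) (p f : nat) (r : 'I_f -> nat).
Hypothesis pr : prime p.
Hypothesis f_gt0 : (0 < f)%N.
Hypothesis r_ge_q : forall j, (p ^ f <= r j)%N.
Local Notation Pol := {mpoly F[f + f]}.
Local Notation cst k := (fun _ : 'I_f => k%N).
Local Notation I := (@in_theta_ideal F f p).
Implicit Types (m : 'X_{1..f + f}) (w : Pol).

Definition in_iota_image w := exists (c : F) (P : Pol),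
  multihomog (cst p.-1) P /\ I (w - (c *: iota0 F p r + iotap1 p r P)).

Lemma in_iota_image0 : in_iota_image 0.
Proof.
exists 0, 0; split; first exact: multihomog0.
by rewrite iotap1_0 scale0r !addr0 subrr; apply: in_theta_ideal0.
Qed.

Lemma in_iota_imageD w1 w2 :
  in_iota_image w1 -> in_iota_image w2 -> in_iota_image (w1 + w2).
Proof.
move=> [c1 [P1 [h1 i1]]] [c2 [P2 [h2 i2]]]; exists (c1 + c2), (P1 + P2).
split; first exact: multihomogD.
rewrite iotap1D scalerDl.
suff -> : forall a1 a2 b1 b2 u1 u2 : Pol,
  u1 + u2 - (a1 + a2 + (b1 + b2)) = (u1 - (a1 + b1)) + (u2 - (a2 + b2)).
  exact: in_theta_idealD.
by move=> *; ring.
Qed.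

Lemma in_iota_imageZ a w : in_iota_image w -> in_iota_image (a *: w).
Proof.
move=> [c [P [h i]]]; exists (a * c), (a *: P); split; first exact: multihomogZ.
rewrite iotap1Z -scalerA -scalerDr -scalerBr.
exact: in_theta_idealZ.
Qed.

Lemma in_iota_image_congr w w' : I (w - w') -> in_iota_image w' -> in_iota_image w.
Proof.
move=> hw [c [P [h i]]]; exists c, P; split => //.
rewrite -[w](subrK w') -addrA; exact: in_theta_idealD.
Qed.

Definition Ydeg m := (\sum_(j < f) m (Yv j))%N.

(* [X_j Y_(j-1)^p] may be traded for [Y_j X_(j-1)^p]: the difference is a
   multiple of [theta_j], and the total [Y]-degree drops by [p - 1]. *)
Lemma theta_reduction m j :
  (0 < m (Xv j))%N -> (p <= m (Yv (prevj j)))%N ->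
  exists m', [/\ forall i, (m' (Xv i) + m' (Yv i) = m (Xv i) + m (Yv i))%N,
    (Ydeg m' < Ydeg m)%N & I ('X_[m] - 'X_[m'])].
Proof.
move=> hX hY; set jm := prevj j; have p1 := p_gt1 pr.
set u := (U_(Xv j) + U_(Yv jm) *+ p)%MM; set u' := (U_(Yv j) + U_(Xv jm) *+ p)%MM.
have [m0 Em] : exists m0, m = (m0 + u)%MM.
  exists (m - u)%MM; rewrite submK //; apply/mnm_lepP => i.
  rewrite mnmDE mulmnE !mnm1E.
  have [<-|ne1] := eqVneq (Xv j) i; first by rewrite eq_rlshift mul0n addn0.
  by rewrite add0n; have [<-|] := eqVneq (Yv jm) i; rewrite ?mul1n ?mul0n.
exists (m0 + u')%MM; split.
- move=> i; rewrite Em !mnmDE !mulmnE !mnm1E.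
  by rewrite !eq_lshift !eq_rshift !eq_lrshift !eq_rlshift; lia.
- have YdegD (v v' : 'X_{1..f + f}) : Ydeg (v + v')%MM = (Ydeg v + Ydeg v')%N.
    by rewrite /Ydeg -big_split; apply: eq_bigr => i _; rewrite mnmDE.
  have YdegMn (v : 'X_{1..f + f}) n : Ydeg (v *+ n)%MM = (Ydeg v * n)%N.
    by rewrite /Ydeg big_distrl; apply: eq_bigr => i _; rewrite mulmnE.
  have YdegUY (i : 'I_f) : Ydeg U_(Yv i)%MM = 1%N.
    rewrite /Ydeg (bigD1 i) //= mnm1E eqxx big1 // => k hk.
    by rewrite mnm1E eq_rshift eq_sym (negbTE hk).
  have YdegUX (i : 'I_f) : Ydeg U_(Xv i)%MM = 0%N.
    by rewrite /Ydeg big1 // => k _; rewrite mnm1E eq_lrshift.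
  by rewrite Em /u /u' !YdegD !YdegMn !YdegUY !YdegUX; lia.
- have -> : 'X_[m] - 'X_[m0 + u'] = 'X_[m0] * theta F p j :> Pol.
    by rewrite /theta Em !mpolyXD -!mpolyXn -mulrBr.
  exact: in_theta_ideal_theta.
Qed.


Lemma in_iota_image_small_Y m : (forall j, m (Xv j) + m (Yv j) = r j)%N ->
  (forall j, m (Yv j) < p)%N -> in_iota_image 'X_[m].
Proof.
move=> hm small; have p1 := p_gt1 pr.
have [allY | not_allY] := boolP (Ysaturated p m).
  have Em : m = mnmXY (fun j => r j - p.-1)%N (cst p.-1).
    rewrite [LHS]mnmXY_eta; apply: eq_mnmXY => j;
    by have := hm j; have := eqP (forallP allY j); lia.
  (* [X^r + Y^r = iota_(p-1) (X^(p-1) + Y^(p-1))] and [X^m = X^r + Y^r - iota0] *)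
  exists (-1), ('X_[mnmXY (cst p.-1) (cst 0)] + 'X_[mnmXY (cst 0) (cst p.-1)]).
  split; first by apply: multihomogD; apply: multihomogX => j;
    rewrite mnmXY_X mnmXY_Y ?addn0.
  rewrite iotap1D !iotap1X !iota_monE.
  have -> : Ysaturated p (mnmXY (cst p.-1) (cst 0)) = false.
    apply/negbTE/forallPn; exists (Ordinal f_gt0); rewrite mnmXY_Y.
    by rewrite eq_sym -lt0n -ltnS prednK ?prime_gt0.
  have -> : Ysaturated p (mnmXY (cst 0) (cst p.-1)) by apply/forallP => j; rewrite mnmXY_Y.
  rewrite iota0E Em scaleN1r.
  have -> : mnmXY (fun j => r j - mnmXY (cst p.-1) (cst 0) (Yv j))%N
      (fun j => mnmXY (cst p.-1) (cst 0) (Yv j)) = mnmXY r (cst 0).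
    by apply: eq_mnmXY => j; rewrite mnmXY_Y ?subn0.
  suff -> : forall a b c : Pol, b - (- (a - b + c) + (a + c)) = 0 by apply: in_theta_ideal0.
  by move=> *; ring.
exists 0, 'X_[mnmXY (fun j => p.-1 - m (Yv j))%N (fun j => m (Yv j))].
split; first by apply: multihomogX => j; rewrite mnmXY_X mnmXY_Y subnK // -ltnS prednK ?prime_gt0.
rewrite iotap1X iota_monE.
have -> : Ysaturated p (mnmXY (fun j => p.-1 - m (Yv j))%N (fun j => m (Yv j))) = false.
  by apply/negbTE; apply: contra not_allY => /forallP h; apply/forallP => j; have := h j; rewrite mnmXY_Y.
have -> : mnmXY (fun j => r j - mnmXY (fun j => p.-1 - m (Yv j)) (fun j => m (Yv j)) (Yv j))%N
    (fun j => mnmXY (fun j => p.-1 - m (Yv j))%N (fun j => m (Yv j)) (Yv j)) = m.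
  rewrite [RHS]mnmXY_eta; apply: eq_mnmXY => j; rewrite mnmXY_Y //.
  by have := hm j; lia.
by rewrite scale0r add0r subrr; apply: in_theta_ideal0.
Qed.

(* When no [theta]-reduction applies and some [Y]-exponent is [>= p], the
   condition propagates around the cycle [j - 1 -> j] and forces [m = Y^r]. *)
Lemma in_iota_image_reduced m : (forall j, m (Xv j) + m (Yv j) = r j)%N ->
  (forall j, ~~ ((0 < m (Xv j)) && (p <= m (Yv (prevj j)))))%N ->
  in_iota_image 'X_[m].
Proof.
move=> hm irred; have [small | /forallPn [j0]] := boolP [forall j, m (Yv j) < p]%N.
  by apply: in_iota_image_small_Y => // j; apply: (forallP small).
rewrite -leqNgt => big_j0.
have noX j : (p <= m (Yv (prevj j)))%N -> m (Xv j) = 0%N.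
  by move=> hY; apply/eqP; have := irred j; rewrite hY andbT lt0n negbK.
have bigY : forall j, (p <= m (Yv j))%N.
  apply: (@prevj_ind _ (fun j => p <= m (Yv j))%N _ big_j0) => j /noX hX.
  by have := hm j; rewrite hX add0n => ->; apply: p_le_r.
have -> : m = mnmXY (cst 0) r.
  rewrite [LHS]mnmXY_eta; apply: eq_mnmXY => j; first exact: noX.
  by have := hm j; rewrite noX.
exists 0, 'X_[mnmXY (cst 0) (cst p.-1)]; split.
  by apply: multihomogX => j; rewrite mnmXY_X mnmXY_Y.
rewrite iotap1X iota_monE.
have -> : Ysaturated p (mnmXY (cst 0) (cst p.-1)) by apply/forallP => j; rewrite mnmXY_Y.
by rewrite scale0r add0r subrr; apply: in_theta_ideal0.
Qed.

Lemma in_iota_imageX m : (forall j, m (Xv j) + m (Yv j) = r j)%N ->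
  in_iota_image 'X_[m].
Proof.
elim: {m}(Ydeg m).+1 {-2}m (ltnSn (Ydeg m)) => [//|n IHn] m deg_m hm.
case: (pickP (fun j => (0 < m (Xv j)) && (p <= m (Yv (prevj j))))%N)
  => [j /andP [hX hY] | irred]; last first.
  by apply: in_iota_image_reduced => // j; rewrite irred.
have [m' [hm' deg_m' hI]] := theta_reduction hX hY.
apply: in_iota_image_congr hI (IHn _ _ _) => [|i]; first exact: leq_trans deg_m' deg_m.
by rewrite hm'.
Qed.

Lemma in_iota_image_multihomog w : multihomog r w -> in_iota_image w.
Proof.
move=> hw; rewrite (mpolyE w) big_seq; apply: big_ind => //.
- exact: in_iota_image0.
- exact: in_iota_imageD.
by move=> m hm; apply: in_iota_imageZ; apply: in_iota_imageX => j; apply: hw.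
Qed.

End Reduction.

Section Independence.
Variables (F : closedFieldType) (p f : nat).
Hypothesis pr : prime p.
Hypothesis chp : p \in [pchar F].
Hypothesis f_gt0 : (0 < f)%N.
Local Notation Pol := {mpoly F[f + f]}.
Local Notation q := (p ^ f)%N.
Local Notation cst k := (fun _ : 'I_f => k%N).
Local Notation radixY m := (radix p (fun j => m (Yv j))).
Implicit Types (m : 'X_{1..f + f}) (P : Pol).

Lemma Fq_enum : exists2 s : seq F, uniq s /\ size s = q & forall z, z \in s -> z ^+ q = z.
Proof.
have q1 := q_gt1 pr f_gt0.
pose h : {poly F} := 'X^q - 'X.
have size_h : size h = q.+1 by rewrite size_addl ?size_polyXn // size_opp size_polyX.
have [s hs] := closed_field_poly_normal h.
rewrite lead_coefDl ?lead_coefXn ?size_opp ?size_polyX ?size_polyXn // scale1r in hs.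
exists s; last first.
  move=> z zs; have : root h z by rewrite hs root_prod_XsubC.
  by rewrite /root !hornerE subr_eq0 => /eqP.
split; last by have := size_prod_XsubC s id; rewrite -hs size_h => -[].
rewrite -separable_prod_XsubC -hs unlock.
(* [X^q - X] is separable: its derivative is [-1] in characteristic [p]. *)
have -> : h^`() = -1.
  have chp' : p \in [pchar {poly F}] by rewrite pchar_poly.
  rewrite /h derivB derivXn derivX -mulr_natr natrX.
  by rewrite (pcharf0 chp') expr0n gtn_eqF // mulr0 sub0r.
by rewrite -scaleN1r coprimepZr ?oppr_eq0 ?oner_eq0 // coprimep1.
Qed.

Lemma radixY_inj m1 m2 :
  (forall j, m1 (Xv j) + m1 (Yv j) = p.-1)%N ->
  (forall j, m2 (Xv j) + m2 (Yv j) = p.-1)%N ->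
  radixY m1 = radixY m2 -> m1 = m2.
Proof.
move=> h1 h2 /radix_inj eqY.
have ltp (m : 'X_{1..f + f}) : (forall j, m (Xv j) + m (Yv j) = p.-1)%N ->
    forall j, (m (Yv j) < p)%N.
  by move=> hm j; have := hm j; have := prime_gt1 pr; lia.
have {}eqY := eqY (ltp _ h1) (ltp _ h2).
rewrite [m1]mnmXY_eta [m2]mnmXY_eta; apply: eq_mnmXY => //= j.
by have := h1 j; have := h2 j; have := eqY j; lia.
Qed.

Definition Ypoly P : {poly F} := \sum_(m <- msupp P) P@_m *: 'X^(radixY m).

Lemma horner_Ypoly P z : (Ypoly P).[z] = evalFr p 1 z P.
Proof.
rewrite evalFrE /Ypoly horner_sum; apply: eq_bigr => m _.
by rewrite hornerZ hornerXn expr1n mul1r.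
Qed.

Section Homogeneous.
Variable P : Pol.
Hypothesis P_homog : multihomog (cst p.-1) P.

Let radixXY m : m \in msupp P ->
  (radix p (fun j => m (Xv j)) + radixY m)%N = q.-1.
Proof. by move=> hm; apply: radix_pred_split (prime_gt0 pr) (P_homog hm). Qed.

Lemma size_Ypoly : (size (Ypoly P) <= q)%N.
Proof.
rewrite /Ypoly big_seq; apply: (big_ind (fun Q : {poly F} => size Q <= q)%N).
- by rewrite size_poly0.
- by move=> Q1 Q2 h1 h2; apply: leq_trans (size_add _ _) _; rewrite geq_max h1.
move=> m hm; apply: leq_trans (size_scale_leq _ _) _.
by rewrite size_polyXn -(prednK (ltnW (q_gt1 pr f_gt0))) ltnS -(radixXY hm) leq_addl.
Qed.

Lemma coef_Ypoly m0 : m0 \in msupp P -> (Ypoly P)`_(radixY m0) = P@_m0.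
Proof.
move=> hm0; rewrite /Ypoly coef_sum (bigD1_seq m0) ?msupp_uniq //=.
rewrite coefZ coefXn eqxx mulr1 big_seq_cond big1 ?addr0 // => m /andP [hm ne].
rewrite coefZ coefXn.
case: eqP => [/(radixY_inj (P_homog hm0) (P_homog hm)) eq_m|_]; last by rewrite mulr0.
by rewrite eq_m eqxx in ne.
Qed.

Lemma iota_independent c :
  (forall x y : F, x ^+ q = x -> y ^+ q = y ->
     c * ((x != 0) || (y != 0))%:R + evalFr p x y P = 0) ->
  c = 0 /\ P = 0.
Proof.
move=> vanish; have q1 := q_gt1 pr f_gt0.
have Q0 : c%:P + Ypoly P = 0.
  have [s [us size_s] Fq_s] := Fq_enum.
  apply: (roots_geq_poly_eq0 _ us); last first.
    by rewrite size_s; apply: leq_trans (size_add _ _) _; rewrite geq_max size_Ypoly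
      (leq_trans (size_polyC_leq1 c)) // ltnW.
  apply/allP => z zs; rewrite /root hornerD hornerC horner_Ypoly.
  by have := vanish 1 z (expr1n _ _) (Fq_s z zs); rewrite oner_neq0 mulr1 => ->.
have coef_eq0 m : m \in msupp P -> c * (radixY m == 0)%:R + P@_m = 0.
  by move=> hm; have := congr1 (fun Q : {poly F} => Q`_(radixY m)) Q0;
    rewrite coefD coefC coef_Ypoly // coef0 => <-; case: eqP; rewrite ?mulr1 ?mulr0.
have radixY0 m : m \in msupp P -> radixY m = 0%N.
  move=> hm; apply/eqP; apply: contraT => nz.
  by have := coef_eq0 m hm; rewrite (negbTE nz) mulr0 add0r => /eqP; rewrite mcoeff_eq0 hm.
have c0 : c = 0.
  have z0 : (0 : F) ^+ q = 0 by rewrite expr0n gtn_eqF // ltnW.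
  have := vanish 0 1 z0 (expr1n _ _); rewrite eqxx oner_neq0 mulr1 evalFrE.
  rewrite big_seq big1 ?addr0 // => m hm.
  have -> : radix p (fun j => m (Xv j)) = q.-1 by rewrite -(radixXY hm) radixY0 ?addn0.
  by rewrite expr0n gtn_eqF ?mul0r ?mulr0 // -ltnS prednK // ltnW.
split => //; apply/mpolyP => m; rewrite mcoeff0.
case: (boolP (m \in msupp P)) => [hm | /memN_msupp_eq0 //].
by have := coef_eq0 m hm; rewrite c0 mul0r add0r.
Qed.

End Homogeneous.

End Independence.

Lemma unitmx2_lin_eq0 (F : fieldType) (g : 'M[F]_2) (x y : F) : g \in unitmx ->
  (g 0 0 * x + g 1 0 * y == 0) && (g 0 1 * x + g 1 1 * y == 0) =
  (x == 0) && (y == 0).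
Proof.
move=> g_unit; pose u : 'rV[F]_2 := \row_i (if i == 0 then x else y).
have row2_eq0 (v : 'rV[F]_2) : (v == 0) = (v 0 0 == 0) && (v 0 1 == 0).
  apply/eqP/andP => [-> | [/eqP v0 /eqP v1]]; first by rewrite !mxE.
  by apply/rowP => j; rewrite mxE; case: j => [[|[|]]] //= hj;
    [rewrite -v0 | rewrite -v1]; congr (v _ _); apply: val_inj.
have := mulmx_free_eq0 u (_ : row_free g); rewrite row_free_unit => /(_ g_unit).
rewrite !row2_eq0 !mxE !big_ord_recl !big_ord0 !mxE /= => <-.
have -> : lift ord0 ord0 = 1 :> 'I_2 by apply: val_inj.
by rewrite !addr0 ![_ * g _ _]mulrC.
Qed.

Section Kernel.
Variables (F : closedFieldType) (p f : nat) (r : 'I_f -> nat).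
Hypothesis pr : prime p.
Hypothesis chp : p \in [pchar F].
Hypothesis f_gt0 : (0 < f)%N.
Hypothesis r_ge_q : forall j, (p ^ f <= r j)%N.
Local Notation q := (p ^ f)%N.
Hypothesis dvd_q1_r : (q.-1 %| radix p r)%N.
Local Notation Pol := {mpoly F[f + f]}.
Local Notation cst k := (fun _ : 'I_f => k%N).
Local Notation I := (@in_theta_ideal F f p).

Lemma iota_injective c (P : Pol) : multihomog (cst p.-1) P ->
  I (c *: iota0 F p r + iotap1 p r P) -> c = 0 /\ P = 0.
Proof.
move=> hP hI; apply: (iota_independent pr chp f_gt0 hP) => x y hx hy.
have := evalFr_theta_ideal hx hy hI.
by rewrite evalFrD evalFrZ evalFr_iota0 // evalFr_iotap1.
Qed.

Lemma theta_ideal_evalFr (D : Pol) : multihomog r D ->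
  (forall x y : F, x ^+ q = x -> y ^+ q = y -> evalFr p x y D = 0) -> I D.
Proof.
move=> hD vanish.
have [c [P [hP hI]]] := in_iota_image_multihomog pr f_gt0 r_ge_q hD.
suff [c0 P0] : c = 0 /\ P = 0.
  by move: hI; rewrite c0 P0 scale0r iotap1_0 add0r subr0.
apply: (iota_independent pr chp f_gt0 hP) => x y hx hy.
have := evalFr_theta_ideal hx hy hI.
rewrite evalFrB vanish // sub0r => /eqP; rewrite oppr_eq0 => /eqP.
by rewrite evalFrD evalFrZ evalFr_iota0 // evalFr_iotap1.
Qed.

Section Equivariance.
Variable g : 'M[F]_2.
Hypothesis g_GL : inGL2Fq q g.

Let gx x y := g 0 0 * x + g 1 0 * y.
Let gy x y := g 0 1 * x + g 1 1 * y.

Let fixq_g x y : x ^+ q = x -> y ^+ q = y -> gx x y ^+ q = gx x y /\ gy x y ^+ q = gy x y.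
Proof.
move: g_GL => /andP [/forallP g_Fq _] hx hy.
have frobq (u v : F) : (u + v) ^+ q = u ^+ q + v ^+ q.
  by apply: exprDn_pchar; rewrite pnatX (pnatE _ pr) chp.
have gq i j : g i j ^+ q = g i j by apply/eqP; apply: (forallP (g_Fq i)).
by rewrite /gx /gy !frobq !exprMn !gq hx hy.
Qed.

Lemma glact_iota0 : I (glact p g (iota0 F p r) - iota0 F p r).
Proof.
apply: theta_ideal_evalFr => [|x y hx hy].
  have h0 : multihomog r (iota0 F p r) by exact: multihomog_iota0.
  by apply: multihomogB => //; apply: multihomog_glact.
have [hx' hy'] := fixq_g hx hy.
rewrite evalFrB evalFr_glact // !evalFr_iota0 //.
move: g_GL => /andP [_ g_unit]; rewrite -!negb_and.
by rewrite (unitmx2_lin_eq0 _ _ g_unit) subrr.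
Qed.

Lemma glact_iotap1 (P : Pol) : multihomog (cst p.-1) P ->
  I (glact p g (iotap1 p r P) - iotap1 p r (glact p g P)).
Proof.
move=> hP; have hgP : multihomog (cst p.-1) (glact p g P) by apply: multihomog_glact.
apply: theta_ideal_evalFr => [|x y hx hy].
  by apply: multihomogB; [apply: multihomog_glact|];
    apply: multihomog_iotap1.
have [hx' hy'] := fixq_g hx hy.
by rewrite evalFrB evalFr_glact // !evalFr_iotap1 // evalFr_glact // subrr.
Qed.

End Equivariance.

End Kernel.

Theorem proposition1 (p f : nat) (F : closedFieldType) (r : 'I_f -> nat) :
  prime p -> p \in [pchar F] -> (2 <= f)%N ->
  (forall j : 'I_f, p ^ f <= r j)%N ->
  (p ^ f - 1 %| \sum_(j < f) r j * p ^ j)%N ->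
  [/\
    multihomog r (iota0 F p r) /\
    (forall P : {mpoly F[f + f]}, multihomog (fun _ => p.-1) P ->
       multihomog r (iotap1 p r P)),
    (forall g : 'M[F]_2, inGL2Fq (p ^ f) g ->
       in_theta_ideal p (glact p g (iota0 F p r) - iota0 F p r)),
    (forall (g : 'M[F]_2) (P : {mpoly F[f + f]}), inGL2Fq (p ^ f) g ->
       multihomog (fun _ => p.-1) P ->
       in_theta_ideal p (glact p g (iotap1 p r P) - iotap1 p r (glact p g P))),
    (forall (c : F) (P : {mpoly F[f + f]}), multihomog (fun _ => p.-1) P ->
       in_theta_ideal p (c *: iota0 F p r + iotap1 p r P) -> c = 0 /\ P = 0)
  & (forall w : {mpoly F[f + f]}, multihomog r w ->
       exists (c : F) (P : {mpoly F[f + f]}), multihomog (fun _ => p.-1) P /\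
         in_theta_ideal p (w - (c *: iota0 F p r + iotap1 p r P)))].
Proof.
move=> pr chp f_ge2 r_ge_q; rewrite subn1 => dvd_q1_r.
have f_gt0 : (0 < f)%N := ltnW f_ge2.
split.
- split; [exact: multihomog_iota0 | exact: multihomog_iotap1].
- by move=> g; apply: glact_iota0.
- by move=> g P g_GL; apply: glact_iotap1.
- by move=> c P hP; apply: iota_injective.
- by move=> w; apply: in_iota_image_multihomog.
Qed.
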